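(* Let $\Phi$ be the set of formulas of $NOM$, preordered by $\phi\le\psi$ iff $\phi\vdash\psi$ is derivable in $NOM$, let $\mathcal L$ be the partially ordered quotient obtained by identifying $\phi$ and $\psi$ when $\phi\le\psi$ and $\psi\le\phi$, with quotient map $[\,\cdot\,]:\Phi\to\mathcal L$, and let $\neg[\phi]=[\neg\phi]$ (this is a well-defined order-reversing involution). Then $(\mathcal L,\le,\neg)$ is an orthomodular lattice, and for all formulas $\phi,\psi$: $[\phi\wedge\psi]=[\phi]\wedge[\psi]$, $[\phi\rightarrow\psi]=[\phi]\rightarrow[\psi]$ (Sasaki arrow), and $[\neg\phi]=\neg[\phi]$.
   Context: The propositional deductive system $NOM$: formulas are built from propositional letters using $\wedge$, $\rightarrow$, $\neg$. Sequents are $\phi_1,\ldots,\phi_n\vdash\psi$ ($n\ge0$) with antecedent a finite ordered sequence. With $\Gamma$ a finite possibly empty sequence of formulas and $\phi,\psi,\chi$ formulas, the rules of $NOM$ are: (assumption) $\Gamma,\phi\vdash\phi$; (cut) $\Gamma\vdash\phi$, $\Gamma,\phi\vdash\psi$ $\Rightarrow$ $\Gamma\vdash\psi$; (paste) $\Gamma\vdash\phi$, $\Gamma\vdash\psi$ $\Rightarrow$ $\Gamma,\phi\vdash\psi$; (compatible exchange) $\Gamma,\phi,\psi\vdash\phi$, $\Gamma,\phi,\psi\vdash\chi$, $\Gamma,\psi,\phi\vdash\psi$ $\Rightarrow$ $\Gamma,\psi,\phi\vdash\chi$; ($\wedge$-intro) $\Gamma\vdash\phi$, $\Gamma\vdash\psi$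 $\Rightarrow$ $\Gamma\vdash\phi\wedge\psi$; ($\wedge$-elim) $\Gamma\vdash\phi\wedge\psi$ $\Rightarrow$ $\Gamma\vdash\phi$ and $\Rightarrow$ $\Gamma\vdash\psi$; ($\rightarrow$-intro) $\Gamma,\phi\vdash\psi$ $\Rightarrow$ $\Gamma\vdash\phi\rightarrow\psi$; ($\rightarrow$-elim) $\Gamma\vdash\phi\rightarrow\psi$ $\Rightarrow$ $\Gamma,\phi\vdash\psi$; (excluded middle) $\Gamma,\phi\vdash\psi$, $\Gamma,\neg\phi\vdash\psi$ $\Rightarrow$ $\Gamma\vdash\psi$; (explosion) $\Gamma\vdash\neg\phi$ $\Rightarrow$ $\Gamma,\phi\vdash\psi$. An orthomodular lattice is a bounded lattice with an order-reversing involution $\neg$ satisfying $a\wedge\neg a=\bot$, $a\vee\neg a=\top$, and $a\le b\Rightarrow a\vee(\neg a\wedge b)=b$; in it $a\rightarrow b=\neg a\vee(a\wedge b)$. *)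

From Stdlib Require Import List.
Import ListNotations.

Inductive form : Type :=
| Var : nat -> form
| And : form -> form -> form
| Imp : form -> form -> form
| Neg : form -> form.

(* der G f  :  the sequent  G |- f  is derivable in NOM.
   The antecedent is an ordered list; "G, phi" is  G ++ [phi]. *)
Inductive der : list form -> form -> Prop :=
| r_assumption : forall G phi, der (G ++ [phi]) phi
| r_cut : forall G phi psi, der G phi -> der (G ++ [phi]) psi -> der G psi
| r_paste : forall G phi psi, der G phi -> der G psi -> der (G ++ [phi]) psi
| r_cexch : forall G phi psi chi,
    der (G ++ [phi; psi]) phi -> der (G ++ [phi; psi]) chi ->
    der (G ++ [psi; phi]) psi -> der (G ++ [psi; phi]) chi
| r_andI : forall G phi psi, der G phi -> der G psi -> der G (And phi psi)
| r_andE1 : forall G phi psi, der G (And phi psi) -> der G phi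
| r_andE2 : forall G phi psi, der G (And phi psi) -> der G psi
| r_impI : forall G phi psi, der (G ++ [phi]) psi -> der G (Imp phi psi)
| r_impE : forall G phi psi, der G (Imp phi psi) -> der (G ++ [phi]) psi
| r_em : forall G phi psi, der (G ++ [phi]) psi -> der (G ++ [Neg phi]) psi -> der G psi
| r_explosion : forall G phi psi, der G (Neg phi) -> der (G ++ [phi]) psi.

Definition fle (phi psi : form) : Prop := der [phi] psi.

Definition feqv (phi psi : form) : Prop := fle phi psi /\ fle psi phi.

Definition L : Type := { P : form -> Prop | exists phi, P = feqv phi }.

Definition cls (phi : form) : L :=
  exist (fun P => exists phi0, P = feqv phi0) (feqv phi) (ex_intro _ phi eq_refl).

Definition Lle (A B : L) : Prop :=
  forall phi psi, proj1_sig A phi -> proj1_sig B psi -> fle phi psi.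

Definition is_OML {T : Type} (le : T -> T -> Prop) (neg : T -> T)
  (meet join : T -> T -> T) (bot top : T) : Prop :=
  (forall a, le a a) /\
  (forall a b c, le a b -> le b c -> le a c) /\
  (forall a b, le a b -> le b a -> a = b) /\
  (forall a b, le (meet a b) a) /\
  (forall a b, le (meet a b) b) /\
  (forall a b c, le c a -> le c b -> le c (meet a b)) /\
  (forall a b, le a (join a b)) /\
  (forall a b, le b (join a b)) /\
  (forall a b c, le a c -> le b c -> le (join a b) c) /\
  (forall a, le bot a) /\
  (forall a, le a top) /\
  (forall a b, le a b -> le (neg b) (neg a)) /\
  (forall a, neg (neg a) = a) /\
  (forall a, meet a (neg a) = bot) /\
  (forall a, join a (neg a) = top) /\
  (forall a b, le a b -> join a (meet (neg a) b) = b).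

Definition sasaki {T : Type} (neg : T -> T) (meet join : T -> T -> T) (a b : T) : T :=
  join (neg a) (meet a b).

(* Conjunction gives meets and negation an order-reversing involution (double
   negation and contraposition come from excluded middle and explosion), so the
   Lindenbaum quotient is an ortholattice with De Morgan joins.  Compatible
   exchange lets a hypothesis derivable from the later one be cut away in
   inconsistency arguments; with it one shows that [a -> b] is equivalent to
   [~ (a /\ ~ (a /\ b))], i.e. to the Sasaki arrow.  Orthomodularity then
   follows from modus ponens for this arrow: if [a <= b], then
   [~a /\ ~(~a /\ b) <= ~a /\ (~a -> ~b) <= ~b]. *)

From Stdlib Require Import List FunctionalExtensionality PropExtensionality
  ProofIrrelevance ClassicalEpsilon.
Import ListNotations.

Lemma der_weaken_l G f : der G f -> forall K, der (K ++ G) f.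
Proof.
  induction 1; intros K; rewrite ?app_assoc.
  - apply r_assumption.
  - apply r_cut with phi; rewrite <- ?app_assoc; auto.
  - apply r_paste; auto.
  - apply r_cexch; rewrite <- ?app_assoc; auto.
  - apply r_andI; auto.
  - apply r_andE1 with psi; auto.
  - apply r_andE2 with phi; auto.
  - apply r_impI; rewrite <- ?app_assoc; auto.
  - apply r_impE; auto.
  - apply r_em with phi; rewrite <- ?app_assoc; auto.
  - apply r_explosion; auto.
Qed.

Lemma der_of_theorem G f : der [] f -> der G f.
Proof. intros H. rewrite <- (app_nil_r G). exact (der_weaken_l _ _ H G). Qed.

Lemma der_snoc_fle G a b : fle a b -> der (G ++ [a]) b.
Proof. intros H. apply r_impE, der_of_theorem, (r_impI [] a b H). Qed.

Lemma der_fle G a b : der G a -> fle a b -> der G b.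
Proof. intros Ha Hab. apply r_cut with a; auto using der_snoc_fle. Qed.

Lemma fle_refl a : fle a a.
Proof. exact (r_assumption [] a). Qed.

Lemma fle_trans a b c : fle a b -> fle b c -> fle a c.
Proof. apply der_fle. Qed.

Lemma fle_and_l a b : fle (And a b) a.
Proof. apply r_andE1 with b, fle_refl. Qed.

Lemma fle_and_r a b : fle (And a b) b.
Proof. apply r_andE2 with a, fle_refl. Qed.

Lemma fle_and_glb a b c : fle c a -> fle c b -> fle c (And a b).
Proof. apply r_andI. Qed.

Lemma fle_modus_ponens a b : fle (And a (Imp a b)) b.
Proof. apply r_cut with a; [apply fle_and_l | apply r_impE, fle_and_r]. Qed.

Definition inconsistent (G : list form) : Prop := forall f, der G f.

Lemma inconsistent_snoc G a : inconsistent G -> inconsistent (G ++ [a]).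
Proof. intros H f. apply r_explosion, H. Qed.

Lemma inconsistent_snoc_neg G a : der G (Neg a) -> inconsistent (G ++ [a]).
Proof. intros H f. apply r_explosion, H. Qed.

Lemma der_neg_intro G a : inconsistent (G ++ [a]) -> der G (Neg a).
Proof. intros H. apply r_em with a; [apply H | apply r_assumption]. Qed.

(* Compatible exchange swaps [b, a] into [a, b]: its side conditions hold by
   the inconsistency of [G, b, a] and by pasting [G, a |- b] onto [G, a |- a]. *)
Lemma inconsistent_cut G a b :
  der (G ++ [a]) b -> inconsistent (G ++ [b; a]) -> inconsistent (G ++ [a]).
Proof.
  intros Hab Hinc f. apply r_cut with b; auto.
  rewrite <- app_assoc; apply r_cexch; auto.
  pose proof (r_paste (G ++ [a]) b a Hab (r_assumption G a)) as Hpaste.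
  rewrite <- app_assoc in Hpaste; exact Hpaste.
Qed.

Lemma fle_negnegl a : fle (Neg (Neg a)) a.
Proof.
  apply r_em with a.
  - exact (r_assumption [Neg (Neg a)] a).
  - exact (r_explosion [Neg (Neg a)] (Neg a) a (fle_refl _)).
Qed.

Lemma fle_negnegr a : fle a (Neg (Neg a)).
Proof.
  apply (r_impE [] a (Neg (Neg a))), r_em with (Neg a); apply r_impI.
  - exact (r_explosion [Neg a] a _ (fle_refl _)).
  - exact (r_paste [Neg (Neg a)] a (Neg (Neg a)) (fle_negnegl a) (fle_refl _)).
Qed.

Lemma fle_contra a b : fle a b -> fle (Neg b) (Neg a).
Proof.
  intros Hab. apply r_em with a.
  - apply (inconsistent_cut [Neg b] a b).
    + apply der_snoc_fle, Hab.
    + apply (inconsistent_snoc ([Neg b] ++ [b])), inconsistent_snoc_neg, fle_refl.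
  - apply r_assumption.
Qed.

Lemma fle_contradiction a f : fle (And a (Neg a)) f.
Proof.
  apply r_cut with a; [apply fle_and_l|].
  apply r_explosion, fle_and_r.
Qed.

Lemma fle_neg_bottom t a : (forall f, fle t f) -> fle a (Neg t).
Proof.
  intros Ht. apply fle_trans with (Neg (Neg a));
    [apply fle_negnegr | apply fle_contra, Ht].
Qed.

Definition form_or (a b : form) : form := Neg (And (Neg a) (Neg b)).

Lemma fle_or_l a b : fle a (form_or a b).
Proof.
  apply fle_trans with (Neg (Neg a)); [apply fle_negnegr | apply fle_contra, fle_and_l].
Qed.

Lemma fle_or_r a b : fle b (form_or a b).
Proof.
  apply fle_trans with (Neg (Neg b)); [apply fle_negnegr | apply fle_contra, fle_and_r].
Qed.

Lemma fle_or_lub a b c : fle a c -> fle b c -> fle (form_or a b) c.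
Proof.
  intros Hac Hbc. apply fle_trans with (Neg (Neg c)); [|apply fle_negnegl].
  apply fle_contra, fle_and_glb; apply fle_contra; assumption.
Qed.

Lemma fle_imp_sasaki a b : fle (Imp a b) (Neg (And a (Neg (And a b)))).
Proof.
  apply der_neg_intro, (inconsistent_cut [Imp a b] _ a).
  - apply der_snoc_fle, fle_and_l.
  - apply (inconsistent_snoc_neg [Imp a b; a]), der_fle with (And a b).
    + apply r_andI;
        [apply (r_assumption [Imp a b]) | apply (r_impE [Imp a b]), fle_refl].
    + apply fle_trans with (Neg (Neg (And a b)));
        [apply fle_negnegr | apply fle_contra, fle_and_r].
Qed.

(* Assuming [~ (a -> b)], both [~ a] and [a /\ b] are refuted since each
   proves [a -> b]; hence [a /\ ~ (a /\ b)] follows, contradicting the premise. *)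
Lemma fle_sasaki_imp a b : fle (Neg (And a (Neg (And a b)))) (Imp a b).
Proof.
  set (u := And a (Neg (And a b))); set (ni := Neg (Imp a b)).
  assert (Hni : inconsistent [ni; Imp a b])
    by apply (inconsistent_snoc_neg [ni]), fle_refl.
  assert (Hna : inconsistent [ni; Neg a]).
  { apply (inconsistent_cut [ni] (Neg a) (Imp a b)).
    - apply r_impI, (r_explosion [ni; Neg a]), (r_assumption [ni]).
    - exact (inconsistent_snoc [ni; Imp a b] (Neg a) Hni). }
  assert (Hab : inconsistent [ni; And a b]).
  { apply (inconsistent_cut [ni] (And a b) (Imp a b)).
    - apply r_impI, (r_paste [ni; And a b] a b).
      + apply r_andE1 with b, (r_assumption [ni]).
      + apply r_andE2 with a, (r_assumption [ni]).
    - exact (inconsistent_snoc [ni; Imp a b] _ Hni). }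
  assert (Hu : der [Neg u; ni] u).
  { apply r_andI.
    - apply r_em with a; [apply (r_assumption [Neg u; ni]) |].
      exact (der_weaken_l _ _ (Hna a) [Neg u]).
    - apply der_neg_intro; intros f. exact (der_weaken_l _ _ (Hab f) [Neg u]). }
  apply r_em with (Imp a b); [apply r_assumption |].
  apply (inconsistent_cut [Neg u] ni u); auto.
  apply (inconsistent_snoc [Neg u; u]), (inconsistent_snoc_neg [Neg u]), fle_refl.
Qed.

Lemma fle_orthomodular a b : fle a b -> fle b (form_or a (And (Neg a) b)).
Proof.
  intros Hab. apply fle_trans with (Neg (Neg b)); [apply fle_negnegr|].
  apply fle_contra.
  apply fle_trans with (And (Neg a) (Imp (Neg a) (Neg b))); [|apply fle_modus_ponens].
  apply fle_and_glb; [apply fle_and_l|].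
  apply fle_trans with (Neg (And (Neg a) b)); [apply fle_and_r|].
  apply fle_trans with (Neg (And (Neg a) (Neg (And (Neg a) (Neg b)))));
    [|apply fle_sasaki_imp].
  apply fle_contra, fle_and_glb; [apply fle_and_l|].
  apply fle_trans with (Neg (And (Neg a) (Neg b))); [apply fle_and_r|].
  apply fle_trans with (Neg (Neg b)); [|apply fle_negnegl].
  apply fle_contra, fle_and_glb; [apply fle_contra, Hab | apply fle_refl].
Qed.

Lemma feqv_neg a b : feqv a b -> feqv (Neg a) (Neg b).
Proof. intros [Hab Hba]; split; apply fle_contra; assumption. Qed.

Lemma feqv_and a b c d : feqv a b -> feqv c d -> feqv (And a c) (And b d).
Proof.
  intros [Hab Hba] [Hcd Hdc]; split; apply fle_and_glb;
    eauto using fle_trans, fle_and_l, fle_and_r.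
Qed.

Lemma feqv_imp_sasaki a b : feqv (Imp a b) (form_or (Neg a) (And a b)).
Proof.
  assert (Hsasaki : feqv (Neg (And a (Neg (And a b)))) (form_or (Neg a) (And a b)))
    by (apply feqv_neg, feqv_and; split; auto using fle_negnegl, fle_negnegr, fle_refl).
  destruct Hsasaki as [H1 H2]; split.
  - apply fle_trans with (1 := fle_imp_sasaki a b), H1.
  - apply fle_trans with (1 := H2), fle_sasaki_imp.
Qed.

Lemma L_ext (A B : L) : proj1_sig A = proj1_sig B -> A = B.
Proof.
  destruct A as [P HP], B as [Q HQ]; simpl; intros E.
  destruct E; f_equal; apply proof_irrelevance.
Qed.

Lemma cls_eq a b : feqv a b -> cls a = cls b.
Proof.
  intros [Hab Hba]. apply L_ext; simpl.
  extensionality x; apply propositional_extensionality.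
  unfold feqv; split; intros [H1 H2]; split; eauto using fle_trans.
Qed.

Lemma feqv_cls a b : cls a = cls b -> feqv a b.
Proof.
  intros E. apply (f_equal (@proj1_sig _ _)) in E; simpl in E.
  rewrite E; split; apply fle_refl.
Qed.

Definition rep (A : L) : form :=
  proj1_sig (constructive_indefinite_description _ (proj2_sig A)).

Lemma cls_rep A : cls (rep A) = A.
Proof.
  apply L_ext; unfold rep; simpl.
  destruct (constructive_indefinite_description _ _) as [a Ha]; simpl.
  symmetry; exact Ha.
Qed.

Lemma feqv_rep_cls a : feqv (rep (cls a)) a.
Proof. apply feqv_cls, cls_rep. Qed.

Lemma cls_surj A : exists a, A = cls a.
Proof. exists (rep A); symmetry; apply cls_rep. Qed.

Lemma Lle_cls a b : Lle (cls a) (cls b) <-> fle a b.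
Proof.
  split.
  - intros H; apply H; split; apply fle_refl.
  - intros H phi psi [_ Hphi] [Hpsi _]; simpl in *; eauto using fle_trans.
Qed.

Definition Lneg (A : L) : L := cls (Neg (rep A)).
Definition Lmeet (A B : L) : L := cls (And (rep A) (rep B)).
Definition Ljoin (A B : L) : L := cls (form_or (rep A) (rep B)).
Definition Lbot : L := cls (And (Var 0) (Neg (Var 0))).
Definition Ltop : L := cls (Neg (And (Var 0) (Neg (Var 0)))).

Lemma Lneg_cls a : Lneg (cls a) = cls (Neg a).
Proof. apply cls_eq, feqv_neg, feqv_rep_cls. Qed.

Lemma Lmeet_cls a b : Lmeet (cls a) (cls b) = cls (And a b).
Proof. apply cls_eq, feqv_and; apply feqv_rep_cls. Qed.

Lemma Ljoin_cls a b : Ljoin (cls a) (cls b) = cls (form_or a b).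
Proof. apply cls_eq, feqv_neg, feqv_and; apply feqv_neg, feqv_rep_cls. Qed.

Ltac cls_representatives :=
  repeat match goal with
  | A : L |- _ => let a := fresh "a" in destruct (cls_surj A) as [a ->]
  end;
  rewrite ?Lneg_cls, ?Lmeet_cls, ?Ljoin_cls in *;
  rewrite ?Lle_cls in *.

Lemma Lindenbaum_is_OML : is_OML Lle Lneg Lmeet Ljoin Lbot Ltop.
Proof.
  unfold is_OML, Lbot, Ltop.
  repeat split; intros; cls_representatives.
  - apply fle_refl.
  - eapply fle_trans; eassumption.
  - apply cls_eq; split; assumption.
  - apply fle_and_l.
  - apply fle_and_r.
  - apply fle_and_glb; assumption.
  - apply fle_or_l.
  - apply fle_or_r.
  - apply fle_or_lub; assumption.
  - apply fle_contradiction.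
  - apply fle_neg_bottom, fle_contradiction.
  - apply fle_contra; assumption.
  - apply cls_eq; split; [apply fle_negnegl | apply fle_negnegr].
  - apply cls_eq; split; apply fle_contradiction.
  - apply cls_eq; split; apply fle_neg_bottom, fle_contradiction.
  - apply cls_eq; split.
    + apply fle_or_lub; [assumption | apply fle_and_r].
    + apply fle_orthomodular; assumption.
Qed.

Theorem theorem3p8 :
  exists negL : L -> L,
    (forall phi, negL (cls phi) = cls (Neg phi)) /\
    exists (meetL joinL : L -> L -> L) (botL topL : L),
      is_OML Lle negL meetL joinL botL topL /\
      (forall phi psi,
          cls (And phi psi) = meetL (cls phi) (cls psi) /\
          cls (Imp phi psi) = sasaki negL meetL joinL (cls phi) (cls psi) /\
          cls (Neg phi) = negL (cls phi)).
Proof.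
  exists Lneg; split; [exact Lneg_cls|].
  exists Lmeet, Ljoin, Lbot, Ltop; split; [exact Lindenbaum_is_OML|].
  intros phi psi; unfold sasaki.
  rewrite Lneg_cls, !Lmeet_cls, Ljoin_cls.
  repeat split.
  apply cls_eq, feqv_imp_sasaki.
Qed.
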